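(* Let $(\mathbb X,S)$ be a minimal subshift over a finite alphabet satisfying the Boshernitzan condition, let $(\mathbb X',S')$ be a $p$-periodic subshift, let $T=S\times S'$ on $\mathbb X\times\mathbb X'$, and let $\mathrm s(p)$ be the number of $S^p$-minimal components of $\mathbb X$. The following are equivalent: (a) $(\mathbb X\times\mathbb X',T)$ is topologically conjugate to a minimal subshift satisfying the Boshernitzan condition; (b) $(\mathbb X\times\mathbb X',T)$ is minimal; (c) $\mathrm s(p)=1$; (d) $(\mathbb X,S)$ has no topological eigenvalue of the form $e^{2\pi ik/p}$, $k\in\mathbb Z$, other than $1$.
   Context: A $p$-periodic subshift is the set of all translates of a single $p$-periodic sequence. Boshernitzan condition for a minimal subshift: there is a shift-invariant probability measure $\nu$ with $\limsup_{n}n\min\{\nu[u]:u\in\mathcal L_n(\mathbb X)\}>0$, $\mathcal L_n(\mathbb X)$ the length-$n$ words occurring in $\mathbb X$, $[u]$ the corresponding cylinder set at position $0$. A topological eigenvalue is $z\in\mathbb C$ with $f\circ S=zf$ for some continuous $f\not\equiv0$. An $S^p$-minimal component is a nonempty closed $S^p$-invariant set minimal with these properties. *)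

From HB Require Import structures.
From mathcomp Require Import all_boot all_order all_algebra.
From mathcomp Require Import all_classical all_reals all_analysis.
From mathcomp Require Import Rstruct.
From mathcomp Require Import complex.

Set Implicit Arguments.
Unset Strict Implicit.
Unset Printing Implicit Defensive.

Import Order.TTheory GRing.Theory Num.Theory.
Local Open Scope classical_set_scope.
Local Open Scope ring_scope.

Notation RR := Rdefinitions.R.
Notation CC := (complex RR).

Section Shifts.
Variable A : Type.

Definition shift (x : int -> A) : int -> A := fun i => x (i + 1).

(** x and y agree on the window [-m, m] (these windows give the cylinder
    base of the product topology of the discrete alphabet) *)
Definition agree (m : nat) (x y : int -> A) : Prop :=
  forall i : int, - (m%:Z) <= i <= m%:Z -> x i = y i.
End Shifts.

Section Generic.
Variable T U : Type.
(** ag n: basic-neighbourhood relation of level n. *)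
Definition closedW (ag : nat -> T -> T -> Prop) (Y : set T) : Prop :=
  forall z, (forall n, exists y, Y y /\ ag n z y) -> Y z.

Definition invariantW (f : T -> T) (Y : set T) : Prop := forall y, Y y -> Y (f y).

Definition minimalW (ag : nat -> T -> T -> Prop) (f : T -> T) (Z : set T) : Prop :=
  (exists z, Z z) /\
  forall Y, Y `<=` Z -> (exists y, Y y) -> closedW ag Y -> invariantW f Y -> Y = Z.

Definition contW (agT : nat -> T -> T -> Prop) (agU : nat -> U -> U -> Prop)
  (Z : set T) (f : T -> U) : Prop :=
  forall z, Z z -> forall n, exists m, forall z', Z z' -> agT m z z' -> agU n (f z) (f z').
End Generic.

Section Subshift.
Variable A : finType.

Definition subshift (X : set (int -> A)) : Prop :=
  (exists x, X x) /\ closedW (@agree A) X /\ (forall x, X x <-> X (shift x)).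

Definition minimal_subshift (X : set (int -> A)) : Prop :=
  subshift X /\ minimalW (@agree A) (@shift A) X.

Definition cyl (i : int) (n : nat) (u : n.-tuple A) : set (int -> A) :=
  [set x | forall j : 'I_n, x (i + (j : nat)%:Z) = tnth u j].

Definition in_lang (X : set (int -> A)) (n : nat) (u : n.-tuple A) : Prop :=
  exists x, X x /\ cyl 0 u x.

(** A, pointed by a (only used to build the measurable space A^Z, whose
    carrier must be a pointedType in MathComp-Analysis; the point is irrelevant) *)
Definition ptA (a : A) : pointedType := HB.pack_for pointedType A (isPointed.Build A a).
Definition seqpt (a : A) : pointedType := (int -> ptA a : pointedType).

(** cylinder sets; they generate the Borel sigma-algebra of A^Z *)
Definition cylinders (a : A) : set (set (seqpt a)) :=
  [set C | exists i n (u : n.-tuple A), C = cyl i u].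

Definition min_cyl_measure (a : A) (X : set (int -> A))
  (nu : set (g_sigma_algebraType (@cylinders a)) -> \bar RR) (n : nat) : \bar RR :=
  \big[Order.min/+oo%E]_(u : n.-tuple A | `[< in_lang X u >]) nu (cyl 0 u).

Definition boshernitzan (X : set (int -> A)) : Prop :=
  exists (a : A) (nu : probability (g_sigma_algebraType (@cylinders a)) RR),
    (forall B : set (g_sigma_algebraType (@cylinders a)),
        measurable B -> nu ((@shift A) @^-1` B) = nu B) /\
    nu X = 1%E /\
    (0 < limn_esup (fun n => (n%:R)%:E * min_cyl_measure X nu n))%E.

Definition topological_eigenvalue (X : set (int -> A)) (z : CC) : Prop :=
  exists f : (int -> A) -> CC,
    (forall x, X x -> forall e : RR, 0 < e ->
        exists m, forall y, X y -> agree m x y -> ComplexField.Normc.normc (f x - f y) < e) /\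
    (forall x, X x -> f (shift x) = z * f x) /\
    (exists x, X x /\ f x != 0).

Definition Sp_minimal_component (X : set (int -> A)) (p : nat) (Y : set (int -> A)) :=
  Y `<=` X /\ closedW (@agree A) Y /\ invariantW (iter p (@shift A)) Y /\
  minimalW (@agree A) (iter p (@shift A)) Y.
End Subshift.

Section Periodic.
Variable B : finType.
Definition periodic_subshift (p : nat) (X : set (int -> B)) : Prop :=
  exists w : int -> B,
    (forall i, w (i + p%:Z) = w i) /\
    (forall q : nat, (0 < q < p)%N -> exists i, w (i + q%:Z) != w i) /\
    X = [set x | exists k : int, x = fun i => w (i + k)].
End Periodic.

Section Product.
Variables A B : finType.
Definition prod_space (X : set (int -> A)) (X' : set (int -> B)) : set ((int -> A) * (int -> B)) :=
  [set z | X z.1 /\ X' z.2].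
Definition prod_shift (z : (int -> A) * (int -> B)) := (shift z.1, shift z.2).
Definition agreeP (m : nat) (z z' : (int -> A) * (int -> B)) :=
  agree m z.1 z'.1 /\ agree m z.2 z'.2.

Definition conj_to_bosh_minimal_subshift (X : set (int -> A)) (X' : set (int -> B)) : Prop :=
  exists (C : finType) (Y : set (int -> C))
         (phi : (int -> A) * (int -> B) -> int -> C)
         (psi : (int -> C) -> (int -> A) * (int -> B)),
    minimal_subshift Y /\ boshernitzan Y /\
    (forall z, prod_space X X' z -> Y (phi z)) /\
    (forall y, Y y -> prod_space X X' (psi y)) /\
    (forall z, prod_space X X' z -> psi (phi z) = z) /\
    (forall y, Y y -> phi (psi y) = y) /\
    contW agreeP (@agree C) (prod_space X X') phi /\
    contW (@agree C) agreeP Y psi /\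
    (forall z, prod_space X X' z -> phi (prod_shift z) = shift (phi z)).
End Product.

(* Let w be the periodic point generating X', so that T = S x S' acts on X x X'.
   (a) -> (b): a conjugacy carries closed invariant sets to closed invariant sets.
   (b) -> (c): for a closed S^p-invariant Y, the points T^j (y, w), y in Y, j < p, form a
   closed T-invariant set, hence all of X x X'; as w has least period p, this forces
   Y = X. So X is S^p-minimal, and then it is its only S^p-minimal component.
   (c) -> (d): S maps S^p-minimal components to S^p-minimal components, so the unique
   one is S-invariant and X is S^p-minimal. An eigenfunction whose eigenvalue is a p-th
   root of unity is S^p-invariant, hence constant on X, so the eigenvalue is 1.
   (d) -> (b): let Z be closed and T-invariant. The pattern
   J(x) = {j mod p | (x, S^j w) in Z} is upper semicontinuous and J(x) + 1 is contained
   in J(Sx), so the size of J is constant on the minimal X; hence J(Sx) = J(x) + 1 and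
   J is locally constant. Every J(x) is a rotation J(x0) + t(x), and if d is the least
   period of J(x0) then x |-> exp(2 pi i t(x) / d) is a continuous eigenfunction for
   exp(2 pi i (p/d) / p). By (d), d = 1, so every J(x) is full and Z = X x X'.
   (b) -> (a): X x X' is the subshift of pairs over A x B. Averaging over j < p the
   images of the Boshernitzan measure of X under x |-> (x, S^j w) gives an invariant
   measure giving each cylinder at least 1/p of the mass of its first coordinate. *)

From Pilot Require Import Defs.
From HB Require Import structures.
From mathcomp Require Import all_boot all_order all_algebra.
From mathcomp Require Import all_classical all_reals all_analysis.
From mathcomp Require Import Rstruct complex.
From mathcomp Require Import zify ring lra.
Set Implicit Arguments.
Unset Strict Implicit.
Unset Printing Implicit Defensive.
Import Order.TTheory GRing.Theory Num.Theory.
Local Open Scope classical_set_scope.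
Local Open Scope ring_scope.

Section closedW_theory.
Variables (T : Type) (ag : nat -> T -> T -> Prop).
Hypothesis ag_le : forall m n x y, (m <= n)%N -> ag n x y -> ag m x y.

Lemma closedW_nbhs (Y : set T) z : closedW ag Y -> ~ Y z ->
  exists n, forall y, Y y -> ~ ag n z y.
Proof.
move=> cY Yz; apply: contrapT => near; apply/Yz/cY => n.
apply: contrapT => far; apply: near; exists n => y Yy zy; apply: far; by exists y.
Qed.

Lemma closedW_bigcup_ord (F : nat -> set T) (q : nat) :
  (forall j, (j < q)%N -> closedW ag (F j)) ->
  closedW ag [set z | exists2 j, (j < q)%N & F j z].
Proof.
move=> cF z near; apply: contrapT => Fz.
have far (j : 'I_q) : exists n, forall y, F j y -> ~ ag n z y.
  by apply: closedW_nbhs; [exact: cF | move=> ?; apply: Fz; exists j].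
have [n_ Hn] := choice far.
have [y [[j jq Fy] zy]] := near (\max_(j < q) n_ j)%N.
apply: (Hn (Ordinal jq) y Fy); apply: ag_le zy; exact: (leq_bigmax (Ordinal jq)).
Qed.

Lemma closedW_setI (Y1 Y2 : set T) :
  closedW ag Y1 -> closedW ag Y2 -> closedW ag (Y1 `&` Y2).
Proof.
move=> c1 c2 z near; split; [apply: c1 | apply: c2] => n;
  by have [y [[? ?] ?]] := near n; exists y.
Qed.

Lemma closedW_setI_rel (Y P : set T) : closedW ag Y ->
  (forall z, Y z -> (forall n, exists y, (Y `&` P) y /\ ag n z y) -> P z) ->
  closedW ag (Y `&` P).
Proof.
move=> cY cP z near; have Yz : Y z.
  by apply: cY => n; have [y [[Yy _] zy]] := near n; exists y.
by split; last exact: cP.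
Qed.

Lemma closedW_preimage (U : Type) (agU : nat -> U -> U -> Prop) (f : T -> U) (Y : set U) :
  (forall n, exists m, forall x y, ag m x y -> agU n (f x) (f y)) ->
  closedW agU Y -> closedW ag (f @^-1` Y).
Proof.
move=> cf cY z near; apply: cY => n; have [m Hm] := cf n.
by have [y [Yy zy]] := near m; exists (f y); split => //; exact: Hm.
Qed.

Lemma minimalW_sub (f : T -> T) (Z P : set T) : minimalW ag f Z ->
  (exists z, Z z /\ P z) -> closedW ag (Z `&` P) -> invariantW f (Z `&` P) -> Z `<=` P.
Proof.
move=> [_ minZ] [z Zz] cZP iZP x Zx.
have eZ := minZ _ (@subIsetl _ Z P) (ex_intro _ z Zz) cZP iZP.
by have [] : (Z `&` P) x by rewrite eZ.
Qed.
End closedW_theory.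

Definition shiftz (A : Type) (k : int) (x : int -> A) : int -> A := fun i => x (i + k).

Section shiftz_theory.
Variable A : Type.
Implicit Types x y : int -> A.

Lemma shiftzD k l x : shiftz k (shiftz l x) = shiftz (k + l) x.
Proof. by apply/funext => i; rewrite /shiftz addrA. Qed.

Lemma shiftz0 x : shiftz 0 x = x.
Proof. by apply/funext => i; rewrite /shiftz addr0. Qed.

Lemma shiftE x : Defs.shift x = shiftz 1 x.
Proof. by []. Qed.

Lemma iter_shift n x : iter n (@Defs.shift A) x = shiftz n%:Z x.
Proof.
elim: n => [|n IH]; first by rewrite shiftz0.
by rewrite iterS IH shiftE shiftzD -add1n PoszD.
Qed.

Lemma shiftz_iter_shift k n x :
  shiftz k (iter n (@Defs.shift A) x) = iter n (@Defs.shift A) (shiftz k x).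
Proof. by rewrite !iter_shift !shiftzD addrC. Qed.

Lemma agree_le m n x y : (m <= n)%N -> agree n x y -> agree m x y.
Proof. by move=> mn xy i Hi; apply: xy; lia. Qed.

Lemma agree_shiftz m k x y : agree (m + `|k|) x y -> agree m (shiftz k x) (shiftz k y).
Proof. by move=> xy i Hi; apply: xy; case: k Hi => n; rewrite ?NegzE; lia. Qed.

Lemma eq_agree x y : (forall n, agree n x y) -> x = y.
Proof. by move=> xy; apply/funext => i; apply: (xy `|i|%N); case: i => n; rewrite ?NegzE; lia. Qed.

Lemma closedW_shiftz k (Y : set (int -> A)) :
  closedW (@agree A) Y -> closedW (@agree A) [set x | Y (shiftz k x)].
Proof.
apply: (closedW_preimage (f := shiftz k)) => n.
by exists (n + `|k|)%N => x y; exact: agree_shiftz.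
Qed.
End shiftz_theory.

Section subshift_theory.
Variables (A : finType) (X : set (int -> A)).
Hypothesis sX : subshift X.

Lemma subshift_closed : closedW (@agree A) X.
Proof. by case: sX => _ []. Qed.

Lemma subshift_shift x : X x -> X (Defs.shift x).
Proof. by case: sX => _ [_ /(_ x) []]. Qed.

Lemma subshift_iter_shift n x : X (iter n (@Defs.shift A) x) <-> X x.
Proof.
elim: n x => [//|n IH] x; rewrite iterS.
by case: sX => _ [_ /(_ (iter n (@Defs.shift A) x))] <-.
Qed.

Lemma subshift_shiftz k x : X x -> X (shiftz k x).
Proof.
case: k => n Xx; first by rewrite -iter_shift; apply/subshift_iter_shift.
by apply/(subshift_iter_shift n.+1); rewrite iter_shift shiftzD NegzE addrN shiftz0.
Qed.
End subshift_theory.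

Section periodic_point.
Variables (B : Type) (w : int -> B) (p : nat).
Hypothesis w_per : forall i, w (i + p%:Z) = w i.

Lemma shiftz_addMp k (m : int) : shiftz (k + m * p%:Z) w = shiftz k w.
Proof.
suff wMp i (n : nat) : w (i + n%:Z * p%:Z) = w i.
  apply/funext => i; rewrite /shiftz addrA; case: m => n; first exact: wMp.
  by rewrite NegzE mulNr -[LHS](wMp _ n.+1) subrK.
elim: n i => [|n IH] i; first by rewrite mul0r addr0.
by rewrite -[n.+1]addn1 PoszD mulrDl mul1r addrA w_per IH.
Qed.

Lemma shiftz_ltp k : (0 < p)%N -> exists2 j : nat, (j < p)%N & shiftz k w = shiftz j%:Z w.
Proof.
move=> p_gt0; have p0 : p%:Z != 0 by rewrite eqz_nat -lt0n.
exists `|(k %% p%:Z)%Z|%N.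
  by rewrite -ltz_nat gez0_abs ?modz_ge0 ?ltz_pmod ?ltz_nat.
by rewrite gez0_abs ?modz_ge0 // {1}(divz_eq k p) addrC shiftz_addMp.
Qed.
End periodic_point.

Notation cis a := ((cos a) +i* (sin a))%C.

Lemma cisD (a b : RR) : cis a * cis b = cis (a + b).
Proof.
rewrite trigo.cosD trigo.sinD; apply/eqP; rewrite eq_complex /=.
by apply/andP; split; apply/eqP; ring.
Qed.

Lemma cisMn (a : RR) n : cis a ^+ n = cis (n%:R * a).
Proof.
elim: n => [|n IH]; first by rewrite expr0 mul0r trigo.cos0 trigo.sin0.
by rewrite exprS IH cisD mulrSr mulrDl mul1r addrC.
Qed.

Lemma cis_2pin (n : nat) : cis (2 * pi * n%:R : RR) = 1.
Proof.
rewrite mulrC -cisMn mulr_natl trigo.cos2pi trigo.sin2pi.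
exact: expr1n.
Qed.

Lemma cis_2piz (k : int) : cis (2 * pi * k%:~R : RR) = 1.
Proof.
case: k => n; first exact: cis_2pin.
rewrite NegzE mulrNz mulrN trigo.cosN trigo.sinN pmulrn.
by have /eqP := cis_2pin n.+1; rewrite eq_complex /= => /andP[/eqP -> /eqP ->]; rewrite oppr0.
Qed.

Lemma cis_2pi_divn_expn (d n : nat) : (0 < d)%N -> (d %| n)%N ->
  cis (2 * pi / d%:R : RR) ^+ n = 1.
Proof.
move=> d_gt0 /dvdnP [m ->]; rewrite cisMn -[RHS](cis_2pin m).
by rewrite natrM [X in cis X](_ : _ = 2 * pi * m%:R) //; field; rewrite pnatr_eq0 -lt0n.
Qed.

Lemma cis_2pi_divn_eq1 (d : nat) : (0 < d)%N -> cis (2 * pi / d%:R : RR) = 1 -> d = 1%N.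
Proof.
move=> d_gt0 /eqP; rewrite eq_complex /= => /andP [/eqP cos1 _].
apply/eqP; rewrite eqn_leq d_gt0 andbT leqNgt; apply/negP => d_gt1.
have pi_gt0 := @pi_gt0 RR; have d_ge2 : (2 : RR) <= d%:R by rewrite ler_nat.
have angle_gt0 : 0 < 2 * pi / d%:R :> RR by rewrite divr_gt0 ?ltr0n // mulr_gt0.
suff : 2 * pi / d%:R = 0 :> RR by move/eqP; rewrite gt_eqF.
apply: trigo.cos_inj; rewrite ?trigo.cos0 // !in_itv /= ?(ltW angle_gt0) ?lexx ?(ltW pi_gt0) //.
by rewrite ler_pdivrMr ?ltr0n //; nra.
Qed.

Lemma normc_lt_eq0 (a : CC) :
  (forall e : RR, 0 < e -> ComplexField.Normc.normc a < e) -> a = 0.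
Proof.
move=> small; apply: ComplexField.Normc.eq0_normc; apply/eqP; rewrite eq_le; apply/andP; split.
  by rewrite leNgt; apply/negP => /small; rewrite ltxx.
by case: a {small} => a b; rewrite /ComplexField.Normc.normc sqrtr_ge0.
Qed.

Lemma big_ord_rotS (R : Type) (idx : R) (op : Monoid.com_law idx) (q : nat) (F : nat -> R) :
  F q = F 0%N -> \big[op/idx]_(j < q) F j.+1 = \big[op/idx]_(j < q) F j.
Proof.
case: q => [|q] Fq; first by rewrite !big_ord0.
by rewrite big_ord_recr big_ord_recl /= Fq Monoid.mulmC.
Qed.

Lemma gt0_limn_esup_le (u v : nat -> \bar RR) (c : RR) : 0 < c ->
  (forall n, (c%:E * u n <= v n)%E) -> (0 < limn_esup u)%E -> (0 < limn_esup v)%E.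
Proof.
move=> c_gt0 uv u_gt0.
have [r r_gt0 r_lt] : exists2 r : RR, 0 < r & (r%:E < limn_esup u)%E.
  move: u_gt0; case: (limn_esup u) => [l| |] //.
  - by rewrite lte_fin => l_gt0; exists (l / 2); rewrite ?lte_fin; lra.
  - by move=> _; exists 1 => //; rewrite ltry.
have esups_ge n : ((c * r)%:E <= esups v n)%E.
  have : (r%:E < esups u n)%E.
    apply: lt_le_trans r_lt _; rewrite limn_esup_lim; apply: lime_le; first exact: is_cvg_esups.
    by exists n => // m /= nm; exact: nonincreasing_esups.
  rewrite /esups /= => /ereal_sup_gt [_ [k /= nk <-]] rk.
  apply: le_trans (_ : v k <= _)%E; last by apply: ereal_sup_ubound; exists k.
  apply: le_trans (uv k); rewrite EFinM; apply: lee_wpmul2l; [by rewrite lee_fin ltW | exact: ltW].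
rewrite limn_esup_lim; apply: lt_le_trans (_ : (c * r)%:E <= _)%E.
  by rewrite lte_fin mulr_gt0.
by apply: lime_ge; [exact: is_cvg_esups | exact: nearW].
Qed.

Section average_distribution.
Context d1 d2 (T1 : measurableType d1) (T2 : measurableType d2) (R : realType).
Variables (P : probability T1 R) (g : nat -> {mfun T1 >-> T2}) (q : nat).

Definition average_distribution :=
  mscale (q%:R^-1)%:nng (msum (fun j => distribution P (g j)) q).

HB.instance Definition _ := Measure.on average_distribution.

Lemma average_distributionE E :
  average_distribution E = ((q%:R^-1)%:E * \sum_(j < q) P (g j @^-1` E))%E.
Proof. by []. Qed.

Lemma average_distribution_eq1 E : (0 < q)%N ->
  (forall j, (j < q)%N -> P (g j @^-1` E) = 1%E) -> average_distribution E = 1%E.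
Proof.
move=> q_gt0 gE1; rewrite average_distributionE.
under eq_bigr => j _ do rewrite gE1 //.
by rewrite sumEFin sumr_const card_ord -EFinM mulVf // pnatr_eq0 -lt0n.
Qed.

Lemma average_distribution_setT : (0 < q)%N -> average_distribution setT = 1%E.
Proof.
by move=> q_gt0; apply: average_distribution_eq1 => // j _; rewrite preimage_setT probability_setT.
Qed.

(* The total mass is 1 only when [0 < q], so the probability structure is packed
   explicitly instead of being declared as an instance. *)
Definition average_probability (q_gt0 : (0 < q)%N) : probability T2 R :=
  HB.pack_for (probability T2 R) average_distribution
    (Measure_isProbability.Build _ _ _ average_distribution
      (average_distribution_setT q_gt0)).
End average_distribution.

Definition unique_Sp_minimal_component (A : finType) (X : set (int -> A)) (p : nat) :=
  exists Y, Sp_minimal_component X p Y /\ forall Y', Sp_minimal_component X p Y' -> Y' = Y.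

Definition no_pth_root_eigenvalue (A : finType) (X : set (int -> A)) (p : nat) :=
  forall k : int, let theta : RR := 2 * pi * (k%:~R) / (p%:R) in
    topological_eigenvalue X (cis theta) -> cis theta = 1.

Section Sp_minimality.
Variables (A : finType) (X : set (int -> A)) (p : nat).
Hypothesis hX : minimal_subshift X.
Local Notation Sp := (iter p (@Defs.shift A)).

Lemma Sp_minimal_component_shiftz Y k : Sp_minimal_component X p Y ->
  Sp_minimal_component X p [set x | Y (shiftz k x)].
Proof.
move=> [YX [cY [iY [[y0 Yy0] minY]]]].
have shiftzK x : shiftz (- k) (shiftz k x) = x by rewrite shiftzD addNr shiftz0.
split; first by move=> x /YX /(subshift_shiftz hX.1 (- k)); rewrite shiftzK.
split; first exact: closedW_shiftz.
split; first by move=> x Yx; rewrite /= shiftz_iter_shift; exact: iY.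
split; first by exists (shiftz (- k) y0); rewrite /= shiftzD addrN shiftz0.
move=> W WY [x0 Wx0] cW iW; apply/seteqP; split => // x Yx.
have -> : W = [set x | [set y | W (shiftz (- k) y)] (shiftz k x)].
  by apply/funext => y; rewrite /= shiftzK.
rewrite (minY [set y | W (shiftz (- k) y)]) //.
- by move=> y /WY; rewrite /= shiftzD addrN shiftz0.
- by exists (shiftz k x0); rewrite /= shiftzK.
- exact: closedW_shiftz.
- by move=> y Wy; rewrite /= shiftz_iter_shift; exact: iW.
Qed.

Lemma Sp_minimal_of_unique_component :
  unique_Sp_minimal_component X p -> minimalW (@agree A) Sp X.
Proof.
move=> [Y [cY uniqY]]; have [YX [closedY [_ mY]]] := cY.
suff <- : Y = X by [].
apply: hX.2.2 => //; first exact: mY.1.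
move=> y Yy; rewrite -(uniqY _ (Sp_minimal_component_shiftz (-1) cY)) /=.
by rewrite shiftE shiftzD addNr shiftz0.
Qed.

Lemma unique_component_of_Sp_minimal :
  minimalW (@agree A) Sp X -> unique_Sp_minimal_component X p.
Proof.
move=> mX; exists X; split.
  do !split => //; first exact: (subshift_closed hX.1).
  by move=> x Xx; rewrite iter_shift; exact: subshift_shiftz hX.1 _ _ Xx.
by move=> Y [YX [cY [iY [neY _]]]]; apply: mX.2.
Qed.

Lemma eigenvalue_eq1_of_Sp_minimal (z : CC) : minimalW (@agree A) Sp X ->
  z ^+ p = 1 -> topological_eigenvalue X z -> z = 1.
Proof.
move=> mX zp [f [f_cont [f_eig [x0 [Xx0 fx0]]]]].
have f_iter n x : X x -> f (iter n (@Defs.shift A) x) = z ^+ n * f x.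
  elim: n x => [|n IH] x Xx; first by rewrite mul1r.
  rewrite iterS f_eig ?IH ?exprS ?mulrA //.
  by rewrite iter_shift; exact: subshift_shiftz hX.1 _ _ Xx.
have f_const : X `<=` [set x | f x = f x0].
  apply: (minimalW_sub mX); first by exists x0.
  - apply: closedW_setI_rel (subshift_closed hX.1) _ => x Xx near.
    apply/eqP; rewrite -subr_eq0; apply/eqP/normc_lt_eq0 => e e_gt0.
    have [m Hm] := f_cont x Xx e e_gt0; have [y [[Xy fy] xy]] := near m.
    by rewrite -fy; exact: Hm.
  - move=> x [Xx fx]; split; first by rewrite iter_shift; exact: subshift_shiftz hX.1 _ _ Xx.
    by rewrite /= f_iter // zp mul1r.
have /= := f_const _ (subshift_shift hX.1 Xx0); rewrite f_eig // => /eqP.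
rewrite -subr_eq0 -{2}(mul1r (f x0)) -mulrBl mulf_eq0 (negbTE fx0) orbF subr_eq0.
by move/eqP.
Qed.

Lemma no_pth_root_eigenvalue_of_Sp_minimal : (0 < p)%N ->
  minimalW (@agree A) Sp X -> no_pth_root_eigenvalue X p.
Proof.
move=> p_gt0 mX k theta; apply: eigenvalue_eq1_of_Sp_minimal mX _.
rewrite cisMn /theta (_ : p%:R * _ = 2 * pi * k%:~R) ?cis_2piz //.
by field; rewrite pnatr_eq0 -lt0n.
Qed.
End Sp_minimality.

Section periods.
Variables (T : Type) (u : nat -> T).

Definition periodn (s : nat) := forall j, u (j + s) = u j.

Lemma periodnD a b : periodn a -> periodn b -> periodn (a + b).
Proof. by move=> ha hb j; rewrite addnA hb ha. Qed.

Lemma periodnM m a : periodn a -> periodn (m * a).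
Proof.
move=> ha; elim: m => [|m IH]; first by move=> j; rewrite mul0n addn0.
by rewrite mulSn; exact: periodnD.
Qed.

Lemma periodnB a b : periodn a -> periodn b -> (b <= a)%N -> periodn (a - b).
Proof. by move=> ha hb ba j; rewrite -hb -addnA subnK // ha. Qed.

Lemma periodn_dvdP q : (0 < q)%N -> periodn q ->
  exists2 d, (0 < d)%N & forall s, periodn s <-> (d %| s)%N.
Proof.
move=> q_gt0 hq.
have [|d /andP [d_gt0 /asboolP hd] dmin] :=
  ex_minnP (ex_intro (fun s => (0 < s)%N && `[< periodn s >]) q _).
  by rewrite q_gt0; apply/asboolP.
exists d => // s; split => [hs|/dvdnP [m ->]]; last exact: periodnM.
apply: contraT; rewrite -lt0n => r_gt0.
have : periodn (s %% d)%N.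
  have -> : (s %% d = s - s %/ d * d)%N by rewrite {2}(divn_eq s d) addKn.
  exact: periodnB hs (periodnM _ hd) (leq_trunc_div s d).
move=> /asboolP hr; have := dmin (s %% d)%N; rewrite r_gt0 hr leqNgt ltn_pmod //.
by move/(_ isT).
Qed.
End periods.

Lemma eq_bool_of_sum_eq (q : nat) (u v : nat -> bool) : (0 < q)%N ->
  (forall j, u (j %% q)%N = u j) -> (forall j, v (j %% q)%N = v j) ->
  (forall j, u j -> v j) -> (\sum_(j < q) u j = \sum_(j < q) v j)%N -> u =1 v.
Proof.
move=> q_gt0 uq vq uv e j; rewrite -uq -vq.
have le_uv (i : 'I_q) : predT i -> ((u i : nat) <= v i ?= iff ((u i : nat) == v i))%N.
  by move=> _; apply: leqif_eq; case: (u i) (uv i) => // ->.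
have := (leqif_sum le_uv).2; rewrite e eqxx => /esym /forallP.
move=> /(_ (Ordinal (ltn_pmod j q_gt0))) /=.
by case: (u _); case: (v _).
Qed.

Section pair_sequences.
Variables A B : finType.
Implicit Types z : (int -> A) * (int -> B).

Lemma agreeP_le m n z z' : (m <= n)%N -> agreeP n z z' -> agreeP m z z'.
Proof. by move=> mn [h1 h2]; split; apply: agree_le mn _. Qed.

Lemma closedW_fst (Y : set (int -> A)) :
  closedW (@agree A) Y -> closedW (@agreeP A B) [set z | Y z.1].
Proof. by apply: (closedW_preimage (f := fst)) => n; exists n => z z' []. Qed.

Lemma closedW_snd_eq (v : int -> B) : closedW (@agreeP A B) [set z | z.2 = v].
Proof. by move=> z near; apply: eq_agree => n; have [y [<- [_ ?]]] := near n. Qed.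

Definition pair_seq (z : (int -> A) * (int -> B)) : int -> A * B := fun i => (z.1 i, z.2 i).

Definition unpair_seq (y : int -> A * B) : (int -> A) * (int -> B) :=
  (fun i => (y i).1, fun i => (y i).2).

Lemma pair_seqK : cancel pair_seq unpair_seq.
Proof. by case. Qed.

Lemma unpair_seqK : cancel unpair_seq pair_seq.
Proof. by move=> y; apply/funext => i; rewrite /pair_seq /=; case: (y i). Qed.

Lemma agree_pair_seq n z z' : agreeP n z z' -> agree n (pair_seq z) (pair_seq z').
Proof. by move=> [z1 z2] i hi; rewrite /pair_seq (z1 i hi) (z2 i hi). Qed.

Lemma agree_unpair_seq n y y' : agree n y y' -> agreeP n (unpair_seq y) (unpair_seq y').
Proof. by move=> yy'; split => i /yy' /= ->. Qed.
End pair_sequences.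

Section product_with_periodic_orbit.
Variables (A B : finType) (X : set (int -> A)) (X' : set (int -> B)) (p : nat).
Variable w : int -> B.
Hypotheses (p_gt0 : (0 < p)%N) (hX : minimal_subshift X).
Hypothesis w_per : forall i, w (i + p%:Z) = w i.
Hypothesis w_least_period : forall q : nat, (0 < q < p)%N -> exists i, w (i + q%:Z) != w i.
Hypothesis X'E : X' = [set x | exists k : int, x = fun i => w (i + k)].

Local Notation XX' := (prod_space X X').
Local Notation T := (@prod_shift A B).

Lemma X'P x : X' x <-> exists2 j : nat, (j < p)%N & x = shiftz j%:Z w.
Proof.
rewrite X'E; split => [[k ->]|[j _ ->]]; last by exists j%:Z.
by have [j jp wk] := shiftz_ltp w_per k p_gt0; exists j; rewrite -?wk.
Qed.

Lemma X'_shiftz_w k : X' (shiftz k w).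
Proof. by rewrite X'E; exists k. Qed.

Lemma shiftz_w_eq j : (j < p)%N -> shiftz j%:Z w = w -> j = 0%N.
Proof.
move=> jp wj; case: (posnP j) => // j_gt0.
have [i /eqP[]] := w_least_period (q := j) (ltac:(by rewrite j_gt0 jp)).
by rewrite -[in RHS]wj.
Qed.

Lemma subshift_X' : subshift X'.
Proof.
split; first by exists (shiftz 0 w); exact: X'_shiftz_w.
split.
  have -> : X' = [set x | exists2 j, (j < p)%N & [set shiftz j%:Z w] x].
    by apply/funext => x; apply/propext; rewrite X'P.
  apply: closedW_bigcup_ord => [|j _ x near]; first exact: agree_le.
  by apply: eq_agree => n; have [y [yE xy]] := near n; rewrite -yE.
move=> x; rewrite X'E; split => -[k xE].
  by exists (1 + k); apply/funext => i; rewrite xE /Defs.shift addrA.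
exists (k - 1); apply/funext => i.
by have /= := congr1 (fun f => f (i - 1)) xE; rewrite /Defs.shift subrK => ->; congr w; ring.
Qed.

Lemma prod_closed : closedW (@agreeP A B) XX'.
Proof.
move=> z near; split; [apply: (subshift_closed hX.1) | apply: (subshift_closed subshift_X')];
  move=> n; have [y [[? ?] [? ?]]] := near n; [exists y.1 | exists y.2]; by split.
Qed.

Lemma prod_invariant : invariantW T XX'.
Proof.
move=> z [Xz1 X'z2]; split; first exact: subshift_shift hX.1 _ Xz1.
exact: subshift_shift subshift_X' _ X'z2.
Qed.

Lemma prod_w x : X x -> XX' (x, w).
Proof. by split => //; rewrite -[w]shiftz0; exact: X'_shiftz_w. Qed.

Lemma minimal_prod_of_conj : conj_to_bosh_minimal_subshift X X' -> minimalW (@agreeP A B) T XX'.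
Proof.
case=> C [Y [phi [psi [[sY minY] [_ [phiY [psiY [psiK [phiK [_ [psi_cont phi_shift]]]]]]]]]]].
have [x0 Xx0] := hX.1.1.
split; first by exists (x0, w); exact: prod_w.
move=> Z ZXX' [z0 Zz0] cZ iZ; apply/seteqP; split => // z XXz.
suff /(_ (phi z) (phiY z XXz)) : Y `<=` psi @^-1` Z by rewrite /= psiK.
apply: (minimalW_sub minY).
- have XXz0 := ZXX' _ Zz0.
  by exists (phi z0); split; [exact: phiY | rewrite /= psiK].
- apply: closedW_setI_rel (subshift_closed sY) _ => y Yy near.
  apply: cZ => n; have [m Hm] := psi_cont y Yy n.
  by have [y' [[Yy' Zy'] yy']] := near m; exists (psi y'); split => //; exact: Hm.
- move=> y [Yy Zy]; split; first exact: subshift_shift sY _ Yy.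
  rewrite /= -[y in Defs.shift y](phiK y Yy) -phi_shift ?psiK; first exact: iZ.
  + exact/prod_invariant/psiY.
  + exact: psiY.
Qed.

(* The union of the T^j (Y x {w}), j < p. *)
Definition T_orbit (Y : set (int -> A)) := [set z : (int -> A) * (int -> B) |
  exists2 j, (j < p)%N & z.2 = shiftz j%:Z w /\ Y (shiftz (- j%:Z) z.1)].

Lemma closedW_T_orbit Y : closedW (@agree A) Y -> closedW (@agreeP A B) (T_orbit Y).
Proof.
move=> cY; apply: closedW_bigcup_ord => [|j _]; first exact: agreeP_le.
apply: closedW_setI; first exact: closedW_snd_eq.
exact: (closedW_fst (Y := [set x | Y (shiftz (- j%:Z) x)]) (closedW_shiftz cY)).
Qed.

Lemma T_orbit_invariant Y :
  invariantW (iter p (@Defs.shift A)) Y -> invariantW T (T_orbit Y).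
Proof.
move=> iY z [j jp [/= z2 Yz1]]; rewrite /T /prod_shift !shiftE.
case: (ltnP j.+1 p) => [jp'|pj].
  exists j.+1 => //; split => /=.
  - by rewrite z2 shiftzD; congr (shiftz _ _); lia.
  - by rewrite shiftzD (_ : _ + 1 = - j%:Z) //; lia.
have pE : p = j.+1 by apply/eqP; rewrite eqn_leq pj jp.
exists 0%N => //; split => /=.
- rewrite z2 shiftzD -[RHS](shiftz_addMp w_per _ 1) add0r mul1r.
  by rewrite (_ : 1 + j%:Z = p%:Z) //; lia.
- rewrite shiftzD (_ : _ + 1 = p%:Z + - j%:Z); last by lia.
  by rewrite -shiftzD -iter_shift; exact: iY.
Qed.

Lemma Sp_minimal_of_minimal_prod :
  minimalW (@agreeP A B) T XX' -> minimalW (@agree A) (iter p (@Defs.shift A)) X.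
Proof.
move=> mXX'; split; first exact: hX.1.1.
move=> Y YX [y0 Yy0] cY iY; apply/seteqP; split => // x Xx.
have : XX' `<=` T_orbit Y.
  apply: (minimalW_sub mXX').
  - exists (y0, w); split; first exact/prod_w/YX.
    by exists 0%N => //; split; rewrite /= ?oppr0 shiftz0.
  - exact: closedW_setI prod_closed (closedW_T_orbit cY).
  - by move=> z [XXz Zz]; split; [exact: prod_invariant | exact: T_orbit_invariant].
move=> /(_ (x, w) (prod_w Xx)) [j jp [/= wj]].
by rewrite (shiftz_w_eq jp (esym wj)) oppr0 shiftz0.
Qed.

Section pattern.
Variable Z : set ((int -> A) * (int -> B)).
Hypotheses (ZXX' : Z `<=` XX') (cZ : closedW (@agreeP A B) Z) (iZ : invariantW T Z).

(* The indicator of the pattern J(x), as a p-periodic sequence. *)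
Definition pattern x (j : nat) : bool := `[< Z (x, shiftz j%:Z w) >].

Definition pattern_size x : nat := (\sum_(j < p) pattern x j)%N.

Lemma pattern_modp x j : pattern x (j %% p)%N = pattern x j.
Proof. by rewrite /pattern {2}(divn_eq j p) PoszD PoszM addrC shiftz_addMp. Qed.

Lemma pattern_shift x j : pattern x j -> pattern (Defs.shift x) j.+1.
Proof.
move=> /asboolP /iZ Zx; apply/asboolP; move: Zx; rewrite /T /prod_shift /= !shiftE.
by rewrite shiftzD -add1n PoszD.
Qed.

Lemma pattern_nbhs x : exists m, forall y, agree m x y -> forall j, pattern y j -> pattern x j.
Proof.
have far (j : 'I_p) : exists n, ~~ pattern x j -> forall z, Z z -> ~ agreeP n (x, shiftz j%:Z w) z.
  case: (boolP (pattern x j)) => [_|/asboolP /(closedW_nbhs cZ) [n Hn]]; first by exists 0%N.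
  by exists n.
have [n_ Hn] := choice far.
exists (\max_(j < p) n_ j)%N => y xy j; rewrite -!(pattern_modp _ j).
apply: contraTT => /(Hn (Ordinal (ltn_pmod j p_gt0))) far_x; apply/negP => /asboolP Zy.
apply: (far_x _ Zy); split => //=; apply: agree_le xy; exact: leq_bigmax.
Qed.

Lemma pattern_size_le x y : (forall j, pattern y j -> pattern x j) ->
  (pattern_size y <= pattern_size x)%N.
Proof. by move=> yx; apply: leq_sum => j _; case: (pattern y j) (yx j) => // ->. Qed.

Lemma pattern_size_shift x : (pattern_size x <= pattern_size (Defs.shift x))%N.
Proof.
rewrite /pattern_size -(big_ord_rotS _ (F := fun j => nat_of_bool (pattern (Defs.shift x) j))).
  by apply: leq_sum => j _; case: (pattern x j) (@pattern_shift x j) => // ->.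
by rewrite /= -[in LHS]pattern_modp modnn.
Qed.

Lemma pattern_size_ge y y' : X y -> X y' -> (pattern_size y' <= pattern_size y)%N.
Proof.
move=> Xy Xy'; suff: X `<=` [set y | (pattern_size y' <= pattern_size y)%N] by apply.
apply: (minimalW_sub hX.2); first by exists y'; split => //=.
- apply: closedW_setI_rel (subshift_closed hX.1) _ => u Xu near.
  have [m Hm] := pattern_nbhs u; have [v [[Xv le] uv]] := near m.
  exact: leq_trans le (pattern_size_le (Hm v uv)).
- move=> u [Xu le]; split; first exact: subshift_shift hX.1 _ Xu.
  exact: leq_trans le (pattern_size_shift u).
Qed.

Lemma pattern_size_const y y' : X y -> X y' -> pattern_size y = pattern_size y'.
Proof. by move=> Xy Xy'; apply/eqP; rewrite eqn_leq !pattern_size_ge. Qed.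

Lemma pattern_shiftE y j : X y -> pattern (Defs.shift y) j.+1 = pattern y j.
Proof.
move=> Xy; apply/esym; move: j.
apply: (eq_bool_of_sum_eq (v := fun j => pattern (Defs.shift y) j.+1) p_gt0).
- exact: pattern_modp.
- move=> j; rewrite /= -[LHS]pattern_modp -[RHS]pattern_modp.
  by rewrite -[(j %% p).+1]addn1 -[j.+1]addn1 modnDml.
- exact: pattern_shift.
rewrite (big_ord_rotS _ (F := fun j => nat_of_bool (pattern (Defs.shift y) j))).
  by apply: pattern_size_const => //; exact: subshift_shift hX.1 _ Xy.
by rewrite /= -[in LHS]pattern_modp modnn.
Qed.

Lemma pattern_locally_constant y : X y ->
  exists m, forall y', X y' -> agree m y y' -> pattern y' =1 pattern y.
Proof.
move=> Xy; have [m Hm] := pattern_nbhs y; exists m => y' Xy' yy'.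
apply: (eq_bool_of_sum_eq p_gt0); [exact: pattern_modp | exact: pattern_modp | exact: Hm |].
exact: pattern_size_const.
Qed.

Variables (x0 : int -> A) (j0 : nat).
Hypothesis Zx0 : Z (x0, shiftz j0%:Z w).

Definition rotated (t : nat) y := forall j, pattern y (j + t) = pattern x0 j.

Lemma rotated_shift t y : X y -> rotated t y -> rotated t.+1 (Defs.shift y).
Proof. by move=> Xy ty j; rewrite addnS pattern_shiftE. Qed.

Lemma rotated_period t t' y : rotated t y -> rotated t' y -> (t <= t')%N ->
  periodn (pattern x0) (t' - t).
Proof. by move=> ty t'y tt' j; rewrite -ty -addnA subnK // t'y. Qed.

Lemma rotatedX y : X y -> exists t, rotated t y.
Proof.
move: y; apply: (minimalW_sub hX.2).
- by exists x0; split; [exact: (ZXX' Zx0).1 | exists 0%N => j; rewrite addn0].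
- apply: closedW_setI_rel (subshift_closed hX.1) _ => u Xu near.
  have [m Hm] := pattern_locally_constant Xu; have [v [[Xv [t vt]] uv]] := near m.
  by exists t => j; rewrite -(Hm v Xv uv (j + t)) vt.
- move=> u [Xu [t ut]]; split; first exact: subshift_shift hX.1 _ Xu.
  by exists t.+1; exact: rotated_shift.
Qed.

Lemma rotation_eigenvalue d : (0 < d)%N ->
  (forall s, periodn (pattern x0) s -> (d %| s)%N) ->
  topological_eigenvalue X (cis (2 * pi / d%:R)).
Proof.
move=> d_gt0 d_dvd; set lam := cis _.
have lamE t t' y : rotated t y -> rotated t' y -> lam ^+ t = lam ^+ t'.
  wlog tt' : t t' / (t <= t')%N.
    move=> H ty t'y; case: (leqP t t') => [|/ltnW] tt'; first exact: H.
    by apply/esym; exact: H.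
  move=> ty t'y; rewrite -(subnKC tt') exprD.
  by rewrite (cis_2pi_divn_expn d_gt0 (d_dvd _ (rotated_period ty t'y tt'))) mulr1.
pose f y := lam ^+ xget 0%N [set t | rotated t y].
have fE t y : rotated t y -> f y = lam ^+ t.
  by move=> ty; exact: (lamE _ _ _ (xgetPex 0%N (ex_intro [set t | rotated t y] t ty)) ty).
exists f; split; [|split].
- move=> y Xy e e_gt0; have [m Hm] := pattern_locally_constant Xy.
  exists m => y' Xy' yy'; have [t ty] := rotatedX Xy.
  have ty' : rotated t y' by move=> j; rewrite (Hm y' Xy' yy') ty.
  by rewrite (fE _ _ ty) (fE _ _ ty') subrr ComplexField.Normc.normc0.
- move=> y Xy; have [t ty] := rotatedX Xy.
  by rewrite (fE _ _ ty) (fE _ _ (rotated_shift Xy ty)) exprS.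
- exists x0; split; first exact: (ZXX' Zx0).1.
  by rewrite (fE 0%N) ?expr0 ?oner_eq0 // => j; rewrite addn0.
Qed.

Lemma prod_sub_of_no_pth_root : no_pth_root_eigenvalue X p -> XX' `<=` Z.
Proof.
move=> no_root.
have [d d_gt0 periodE] : exists2 d, (0 < d)%N & forall s, periodn (pattern x0) s <-> (d %| s)%N.
  by apply: periodn_dvdP p_gt0 _ => j; rewrite -[LHS]pattern_modp modnDr pattern_modp.
have d1 : d = 1%N.
  have /periodE dp : periodn (pattern x0) p.
    by move=> j; rewrite -[LHS]pattern_modp modnDr pattern_modp.
  apply: (cis_2pi_divn_eq1 d_gt0).
  have := no_root (p %/ d)%:Z; rewrite /= (_ : 2 * pi * _ / _ = 2 * pi / d%:R).
    by apply; apply: rotation_eigenvalue => // s /periodE.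
  rewrite -[in X in _ / X](divnK dp) natrM; field.
  by rewrite !pnatr_eq0 -!lt0n d_gt0 divn_gt0 // dvdn_leq.
have all_true j : pattern x0 j.
  have p1 : periodn (pattern x0) 1 by apply/periodE; rewrite d1 dvd1n.
  have const j' : pattern x0 j' = pattern x0 0 by elim: j' => // j' IH; rewrite -addn1 p1.
  by rewrite const -(const j0); apply/asboolP.
move=> [x v] [/= Xx X'v]; have [t xt] := rotatedX Xx.
have [j _ ->] := (X'P v).1 X'v.
suff : pattern x j by move/asboolP.
rewrite -pattern_modp -(modnMDl t) pattern_modp -(subnK (_ : t <= t * p + j)%N) ?xt //.
by rewrite (leq_trans (leq_pmulr t p_gt0)) ?leq_addr.
Qed.
End pattern.

Lemma minimal_prod_of_no_pth_root :
  no_pth_root_eigenvalue X p -> minimalW (@agreeP A B) T XX'.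
Proof.
move=> no_root; split; first by have [x Xx] := hX.1.1; exists (x, w); exact: prod_w.
move=> Z ZXX' [[x0 v0] Zz0] cZ iZ; apply/seteqP; split => //.
have [j0 _ v0E] := (X'P v0).1 (ZXX' _ Zz0).2.
by rewrite v0E in Zz0; exact: (prod_sub_of_no_pth_root ZXX' cZ iZ Zz0 no_root).
Qed.

Definition pairs : set (int -> A * B) := [set y | XX' (unpair_seq y)].

Lemma subshift_pairs : subshift pairs.
Proof.
split.
  have [x Xx] := hX.1.1; exists (pair_seq (x, w)).
  by rewrite /pairs /= pair_seqK; exact: prod_w.
split.
  apply: (closedW_preimage (f := @unpair_seq A B) _ prod_closed) => n.
  by exists n => y y'; exact: agree_unpair_seq.
move=> y; have e1 := hX.1.2.2 (unpair_seq y).1; have e2 := subshift_X'.2.2 (unpair_seq y).2.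
by split => -[h1 h2]; split; [exact/e1 | exact/e2 | exact/e1 | exact/e2].
Qed.

Lemma minimal_pairs : minimalW (@agreeP A B) T XX' -> minimal_subshift pairs.
Proof.
move=> mXX'; split; first exact: subshift_pairs.
split; first exact: subshift_pairs.1.
move=> W Wpairs [y0 Wy0] cW iW; apply/seteqP; split => // y pairs_y.
suff /(_ (unpair_seq y) pairs_y) : XX' `<=` @pair_seq A B @^-1` W by rewrite /= unpair_seqK.
apply: (minimalW_sub mXX').
- by exists (unpair_seq y0); split; [exact: Wpairs | rewrite /= unpair_seqK].
- apply: closedW_setI prod_closed (closedW_preimage _ cW) => n.
  by exists n => z z'; exact: agree_pair_seq.
- by move=> z [XXz Wz]; split; [exact: prod_invariant | exact: iW Wz].
Qed.

Section averaged_measure.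
Variables (a : A) (nu : probability (g_sigma_algebraType (@cylinders A a)) RR).
Let c : A * B := (a, w 0).

Definition pair_with_w (j : nat) :
    g_sigma_algebraType (@cylinders A a) -> g_sigma_algebraType (@cylinders (A * B)%type c) :=
  fun x => pair_seq (x, shiftz j%:Z w).

Lemma pair_with_w_preimage_cyl j i n (u : n.-tuple (A * B)) :
  pair_with_w j @^-1` cyl i u =
  if `[< forall k : 'I_n, w (i + k%:Z + j%:Z) = (tnth u k).2 >]
  then cyl i (map_tuple fst u) else set0.
Proof.
case: asboolP => wu; apply/funext => x; apply/propext; split => //.
- by move=> xu k; rewrite tnth_map -(xu k).
- move=> xu k; rewrite /pair_with_w /pair_seq /= (xu k) tnth_map /shiftz (wu k).
  by case: (tnth u k).
- by move=> xu; apply: wu => k; rewrite -(xu k).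
Qed.

Lemma measurable_pair_with_w j : measurable_fun setT (pair_with_w j).
Proof.
apply: (@measurability _ _ _ _ setT (pair_with_w j) (@cylinders _ c) erefl).
move=> _ [_ [i [n [u ->]]] <-]; rewrite setTI pair_with_w_preimage_cyl.
case: asboolP => _; last exact: measurable0.
by apply: sub_sigma_algebra; exists i, n, (map_tuple fst u).
Qed.

HB.instance Definition _ j :=
  isMeasurableFun.Build _ _ _ _ (pair_with_w j) (measurable_pair_with_w j).

Lemma pair_with_w_shift j x :
  Defs.shift (pair_with_w j x) = pair_with_w j.+1 (Defs.shift x).
Proof.
apply/funext => i; rewrite /pair_with_w /pair_seq /Defs.shift /shiftz /=.
by rewrite (_ : i + 1 + j%:Z = i + j.+1%:Z) //; lia.
Qed.

Lemma pair_with_w_p : pair_with_w p = pair_with_w 0.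
Proof.
apply/funext => x; apply/funext => i; rewrite /pair_with_w /pair_seq /shiftz /= w_per.
by have /= -> := addr0 i.
Qed.

Definition averaged_nu := average_probability nu (fun j => pair_with_w j) p_gt0.

Lemma averaged_nu_shift_invariant :
  (forall E : set (g_sigma_algebraType (@cylinders A a)),
     measurable E -> nu ((@Defs.shift A) @^-1` E) = nu E) ->
  forall E : set (g_sigma_algebraType (@cylinders (A * B)%type c)),
    measurable E -> averaged_nu ((@Defs.shift (A * B)%type) @^-1` E) = averaged_nu E.
Proof.
move=> nu_inv E mE; rewrite /averaged_nu /= !average_distributionE; congr (_ * _)%E.
have shift_preimage j :
    nu (pair_with_w j @^-1` ((@Defs.shift (A * B)%type) @^-1` E)) = nu (pair_with_w j.+1 @^-1` E).
  rewrite -[RHS]nu_inv; last by rewrite -[X in measurable X]setTI; exact: measurable_pair_with_w.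
  by apply: congr1; apply/funext => x; rewrite /preimage /= pair_with_w_shift.
under eq_bigr do rewrite shift_preimage.
by apply: (big_ord_rotS _ (F := fun j => nu (pair_with_w j @^-1` E))); rewrite /= pair_with_w_p.
Qed.

Lemma averaged_nu_pairs : nu X = 1%E -> averaged_nu pairs = 1%E.
Proof.
move=> nuX; apply: average_distribution_eq1 => // j _; rewrite -[RHS]nuX; apply: congr1.
apply/funext => x; apply/propext; split => [[]//|Xx]; split => //; exact: X'_shiftz_w.
Qed.

Lemma averaged_nu_cyl n :
  ((p%:R^-1)%:E * min_cyl_measure X nu n <= min_cyl_measure pairs averaged_nu n)%E.
Proof.
rewrite /min_cyl_measure; apply: le_bigmin; first exact: leey.
move=> u /asboolP [y [[Xy1 X'y2] yu]]; have [j jp y2E] := (X'P _).1 X'y2.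
have preE : pair_with_w j @^-1` cyl 0 u = cyl 0 (map_tuple fst u).
  rewrite pair_with_w_preimage_cyl; case: asboolP => // -[] k.
  by rewrite -(yu k); have /= -> := congr1 (fun f => f (0 + k%:Z)) y2E.
have u1 : in_lang X (map_tuple fst u).
  by exists (unpair_seq y).1; split => // k; rewrite tnth_map -(yu k).
rewrite /averaged_nu /= average_distributionE.
apply: le_trans (_ : (p%:R^-1)%:E * nu (cyl 0 (map_tuple fst u)) <= _)%E.
  apply: lee_wpmul2l; first by rewrite lee_fin invr_ge0 ler0n.
  by apply: bigmin_le_cond; apply/asboolP.
apply: lee_wpmul2l; first by rewrite lee_fin invr_ge0 ler0n.
rewrite (bigD1 (Ordinal jp)) //= preE; apply: leeDl.
by apply: sume_ge0 => k _; exact: measure_ge0.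
Qed.
End averaged_measure.

Lemma boshernitzan_pairs : boshernitzan X -> boshernitzan pairs.
Proof.
move=> [a [nu [nu_inv [nuX nu_pos]]]].
exists (a, w 0), (averaged_nu nu); split; first exact: averaged_nu_shift_invariant.
split; first exact: averaged_nu_pairs.
apply: (gt0_limn_esup_le (c := p%:R^-1)) nu_pos => [|n]; first by rewrite invr_gt0 ltr0n.
by rewrite muleCA; apply: lee_wpmul2l; [rewrite lee_fin ler0n | exact: averaged_nu_cyl].
Qed.

Lemma conj_of_minimal_prod : boshernitzan X ->
  minimalW (@agreeP A B) T XX' -> conj_to_bosh_minimal_subshift X X'.
Proof.
move=> bX mXX'; exists (A * B)%type, pairs, (@pair_seq A B), (@unpair_seq A B).
split; first exact: minimal_pairs.
split; first exact: boshernitzan_pairs.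
split; first by move=> z XXz; rewrite /pairs /= pair_seqK.
split; first by [].
split; first by move=> z _; exact: pair_seqK.
split; first by move=> y _; exact: unpair_seqK.
split; first by move=> z _ n; exists n => z' _; exact: agree_pair_seq.
split; first by move=> y _ n; exists n => y' _; exact: agree_unpair_seq.
by [].
Qed.
End product_with_periodic_orbit.

Theorem theorem3p9 (A B : finType) (X : set (int -> A)) (X' : set (int -> B)) (p : nat) :
  (0 < p)%N ->
  minimal_subshift X -> boshernitzan X ->
  periodic_subshift p X' ->
  [<-> (* (a) *) conj_to_bosh_minimal_subshift X X';
       (* (b) *) minimalW (@agreeP A B) (@prod_shift A B) (prod_space X X');
       (* (c) s(p) = 1 *)
       (exists Y, Sp_minimal_component X p Y /\
                  forall Y', Sp_minimal_component X p Y' -> Y' = Y);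
       (* (d) *)
       (forall k : int,
          let theta : RR := 2 * pi * (k%:~R) / (p%:R) in
          topological_eigenvalue X (cos theta +i* sin theta)%C ->
          (cos theta +i* sin theta)%C = 1)].
Proof.
move=> p_gt0 hX bX [w [w_per [w_least X'E]]].
tfae.
- exact: (minimal_prod_of_conj p_gt0 hX w_per X'E).
- move/(Sp_minimal_of_minimal_prod p_gt0 hX w_per w_least X'E).
  exact: (unique_component_of_Sp_minimal hX).
- move/(Sp_minimal_of_unique_component hX).
  exact: (no_pth_root_eigenvalue_of_Sp_minimal hX p_gt0).
- move/(minimal_prod_of_no_pth_root p_gt0 hX w_per X'E).
  exact: (conj_of_minimal_prod p_gt0 hX w_per X'E bX).
Qed.
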